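(* Let $\Delta$ be a finite domain, $\mathcal{L}$ a first-order language, $\Omega$ the set of all possible worlds on $\Delta$ w.r.t. $\mathcal{L}$, $R$ a binary predicate of $\mathcal{L}$, $k\ge 1$ an integer, and $\Gamma$ a first-order sentence over $\mathcal{L}$. Let $f_1^R,\dots,f_k^R$ be new binary predicates not in $\mathcal{L}$, with weights $w(f_i^R)=\overline{w}(f_i^R)=1$, and let $\Omega_{\mathrm{ext}}$ be the set of all possible worlds on $\Delta$ w.r.t. $\mathcal{L}$ extended by $f_1^R,\dots,f_k^R$. Define $$\Phi=(|R|=k|\Delta|)\wedge\Big(\forall x,y: R(x,y)\Leftrightarrow\bigvee_{i=1}^k f_i^R(x,y)\Big)\wedge\bigwedge_{i=1}^k\big(\forall x\,\exists y: f_i^R(x,y)\big)\wedge\bigwedge_{i\ne j}\big(\forall x,y:\neg f_i^R(x,y)\vee\neg f_j^R(x,y)\big).$$ Then for all weight functions $w,\overline{w}$ on the predicates of $\mathcal{L}$, $$\mathrm{WFOMC}\big(\Gamma\wedge\forall x\,\exists_{=k}y:R(x,y),\,w,\overline{w},\Omega\big)=\frac{1}{(k!)^{|\Delta|}}\,\mathrm{WFOMC}(\Gamma\wedge\Phi,\,w,\overline{w},\Omega_{\mathrm{ext}}).$$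
   Context: A possible world on $\Delta$ is a set of ground atoms over the language's predicates and $\Delta$. $N(R,\omega)$ is the number of ground atoms of $R$ true in $\omega$. For a set $\Omega$ of possible worlds, $\mathrm{WFOMC}(\Gamma,w,\overline{w},\Omega)=\sum_{\omega\in\Omega,\,\omega\models\Gamma}\prod_{R} w(R)^{N(R,\omega)}\overline{w}(R)^{|\Delta|^{\mathrm{arity}(R)}-N(R,\omega)}$, the product ranging over the predicates of the language of $\Omega$. The cardinality constraint $|R|=c$ holds in $\omega$ iff $N(R,\omega)=c$. $\forall x\,\exists_{=k}y:R(x,y)$ holds iff every $x\in\Delta$ has exactly $k$ distinct $y\in\Delta$ with $R(x,y)$. *)

From HB Require Import structures.
From mathcomp Require Import all_boot all_order all_algebra.
Set Implicit Arguments. Unset Strict Implicit. Unset Printing Implicit Defensive.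
Import Order.TTheory GRing.Theory Num.Theory.

(* A relational (function-free) first-order language is given by a finite
   type P of predicate symbols and an arity function ar : P -> nat.
   Formulas use de Bruijn indices: a quantifier binds index 0. *)
Inductive formula (P : Type) : Type :=
| FAtom of P & seq nat
| FEq of nat & nat
| FNot of formula P
| FAnd of formula P & formula P
| FOr of formula P & formula P
| FAll of formula P
| FEx of formula P.

Arguments FEq {P}.

Fixpoint map_formula (P Q : Type) (g : P -> Q) (f : formula P) : formula Q :=
  match f with
  | FAtom p a => FAtom (g p) a
  | FEq i j => FEq i j
  | FNot f1 => FNot (map_formula g f1)
  | FAnd f1 f2 => FAnd (map_formula g f1) (map_formula g f2)
  | FOr f1 f2 => FOr (map_formula g f1) (map_formula g f2)
  | FAll f1 => FAll (map_formula g f1)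
  | FEx f1 => FEx (map_formula g f1)
  end.

Fixpoint closed_at (P : Type) (n : nat) (f : formula P) : bool :=
  match f with
  | FAtom _ a => all (fun i => i < n) a
  | FEq i j => (i < n) && (j < n)
  | FNot f1 => closed_at n f1
  | FAnd f1 f2 => closed_at n f1 && closed_at n f2
  | FOr f1 f2 => closed_at n f1 && closed_at n f2
  | FAll f1 => closed_at n.+1 f1
  | FEx f1 => closed_at n.+1 f1
  end.

Definition sentence (P : Type) (f : formula P) : bool := closed_at 0 f.

Section Worlds.
Variables (P : finType) (ar : P -> nat) (D : finType).

Definition atom := {p : P & (ar p).-tuple D}.
Definition world := {set atom}.

Definition holds (w : world) (p : P) (s : seq D) : bool :=
  [exists t : (ar p).-tuple D, (val t == s) && (Tagged (fun q => (ar q).-tuple D) t \in w)].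

Definition natoms (w : world) (p : P) : nat :=
  #|[set t : (ar p).-tuple D | Tagged (fun q => (ar q).-tuple D) t \in w]|.

Fixpoint eval (f : formula P) (w : world) (env : seq D) : bool :=
  match f with
  | FAtom p a => [exists t : (ar p).-tuple D,
                   ([seq onth env i | i <- a] == [seq Some x | x <- val t])
                   && (Tagged (fun q => (ar q).-tuple D) t \in w)]
  | FEq i j => (onth env i != None) && (onth env i == onth env j)
  | FNot f1 => ~~ eval f1 w env
  | FAnd f1 f2 => eval f1 w env && eval f2 w env
  | FOr f1 f2 => eval f1 w env || eval f2 w env
  | FAll f1 => [forall x : D, eval f1 w (x :: env)]
  | FEx f1 => [exists x : D, eval f1 w (x :: env)]
  end.

Definition models (w : world) (f : formula P) : bool := eval f w [::].

Variable R : numFieldType.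

Definition world_weight (wt wbar : P -> R) (w : world) : R :=
  \prod_(p : P) (wt p ^+ natoms w p * wbar p ^+ (#|D| ^ ar p - natoms w p)).

Definition WFOMC (phi : world -> bool) (wt wbar : P -> R) : R :=
  \sum_(w : world | phi w) world_weight wt wbar w.

End Worlds.

Definition ext_ar (P : Type) (ar : P -> nat) (k : nat) (q : (P + 'I_k)%type) : nat :=
  match q with inl p => ar p | inr _ => 2 end.

Definition ext_weight (P : Type) (R : numFieldType) (k : nat) (wt : P -> R)
  (q : (P + 'I_k)%type) : R :=
  match q with inl p => wt p | inr _ => 1 end.

Definition exactly_k (P : finType) (ar : P -> nat) (D : finType) (k : nat)
  (r : P) (w : world ar D) : bool :=
  [forall x : D, #|[set y : D | holds w r [:: x; y]]| == k].

Definition Phi (P : finType) (ar : P -> nat) (D : finType) (k : nat) (r : P)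
  (w : world (ext_ar ar (k:=k)) D) : bool :=
  [&& natoms w (inl r) == k * #|D|,
      [forall x : D, forall y : D,
         holds w (inl r) [:: x; y] == [exists i : 'I_k, holds w (inr i) [:: x; y]]],
      [forall i : 'I_k, forall x : D, exists y : D, holds w (inr i) [:: x; y]] &
      [forall i : 'I_k, forall j : 'I_k, (i != j) ==>
         [forall x : D, forall y : D,
            ~~ holds w (inr i) [:: x; y] || ~~ holds w (inr j) [:: x; y]]]].

From HB Require Import structures.
From mathcomp Require Import all_boot all_order all_algebra.
Set Implicit Arguments. Unset Strict Implicit. Unset Printing Implicit Defensive.
Import Order.TTheory GRing.Theory Num.Theory.

(* Every world V of the extended language has a reduct [reduct V] to the
   original language; Gamma, the weights and the atom counts of the original
   predicates only depend on this reduct, while the new predicates f_i have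
   weight 1.  Hence both sides are sums over worlds w of the original
   language, and it suffices to count the worlds V with [Phi r V] and
   [reduct V = w]:
   - if [Phi r V], each f_i is the graph of a function [decode V x i] and
     i |-> decode V x i is an injective enumeration of the R-successors of x;
     the cardinality constraint |R| = k|D| then forces every x to have exactly
     k successors, so w satisfies [exactly_k];
   - conversely, if w satisfies [exactly_k], the worlds V over w satisfying Phi
     are in bijection (via [expand w]) with the choices, for every x, of an
     injective enumeration 'I_k -> successors of x, of which there are
     (k!)^|D|.
   So each fiber has (k!)^|D| elements or none, which gives the theorem. *)

Lemma injective_onto (I T : finType) (h : I -> T) (S : {set T}) :
  injective h -> (forall i, h i \in S) -> #|S| = #|I| ->
  forall y, y \in S -> exists i, y = h i.
Proof.
move=> h_inj hS cardS y yS.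
have sub : codom h \subset S by apply/subsetP => _ /codomP [i ->].
have card_eq : #|codom h| = #|S| by rewrite card_codom.
have /(_ y) := subset_cardP card_eq sub.
by rewrite yS => /codomP [i ->]; exists i.
Qed.

Lemma tuple2E (T : Type) (t : 2.-tuple T) : val t = [:: thead t; nth (thead t) t 1].
Proof. by case: t => -[|a [|b [|c s]]]. Qed.

Section Reduct.
Variables (D P : finType) (ar : P -> nat) (k : nat).
Notation ear := (ext_ar ar (k:=k)).

Definition reduct (V : world ear D) : world ar D :=
  [set a : atom ar D | @existT _ (fun q => (ear q).-tuple D) (inl (tag a)) (tagged a) \in V].

Lemma eval_reduct (f : formula P) (V : world ear D) env :
  eval (map_formula inl f) V env = eval f (reduct V) env.
Proof.
elim: f env => [p a|i j|f IH|f IH g IHg|f IH g IHg|f IH|f IH] env //=.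
- by apply: eq_existsb => t; rewrite inE.
- by rewrite IH.
- by rewrite IH IHg.
- by rewrite IH IHg.
- by apply: eq_forallb => x; rewrite IH.
- by apply: eq_existsb => x; rewrite IH.
Qed.

Lemma holds_reduct (V : world ear D) p s : holds V (inl p) s = holds (reduct V) p s.
Proof. by apply: eq_existsb => t; rewrite inE. Qed.

Lemma natoms_reduct (V : world ear D) p : natoms V (inl p) = natoms (reduct V) p.
Proof. by apply: eq_card => t; rewrite !inE. Qed.

(* The new predicates have weights 1, so a world weighs as much as its reduct. *)
Lemma weight_reduct (R : numFieldType) (wt wbar : P -> R) (V : world ear D) :
  world_weight (ext_weight wt) (ext_weight wbar) V = world_weight wt wbar (reduct V).
Proof.
rewrite /world_weight big_sumType /=.
rewrite [X in (_ * X)%R]big1 ?mulr1 => [|i _]; last by rewrite !expr1n mulr1.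
by apply: eq_bigr => p _; rewrite natoms_reduct.
Qed.

Lemma mem_new_atom (V : world ear D) i (t : 2.-tuple D) :
  (@existT _ (fun q => (ear q).-tuple D) (inr i) t \in V)
  = holds V (inr i) [:: thead t; nth (thead t) t 1].
Proof.
apply/idP/existsP => [tV|[t' /andP[/eqP t't tV]]].
  by exists t; rewrite -tuple2E eqxx.
by have <- : t' = t by apply: val_inj; rewrite t't -tuple2E.
Qed.

Notation assignment := {ffun D -> {ffun 'I_k -> D}}.

Definition expand_mem (w : world ar D) (g : assignment) (a : atom ear D) : bool :=
  match a with
  | existT (inl p) t => @existT _ (fun q => (ar q).-tuple D) p t \in w
  | existT (inr i) t => let t2 : 2.-tuple D := t in
      nth (thead t2) t2 1 == g (thead t2) i
  end.

Definition expand (w : world ar D) (g : assignment) : world ear D :=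
  [set a | expand_mem w g a].

Lemma holds_expand_new w g i x y : holds (expand w g) (inr i) [:: x; y] = (y == g x i).
Proof.
apply/existsP/idP => [[t /andP[/eqP tE]]|/eqP ->].
  rewrite inE /=.
  have -> : thead t = x by rewrite /thead (tnth_nth x) /= tE.
  by rewrite tE.
by exists [tuple x; g x i]; rewrite eqxx inE /=.
Qed.

Lemma reduct_expand w g : reduct (expand w g) = w.
Proof. by apply/setP => -[p t]; rewrite !inE. Qed.

Lemma expand_inj w : injective (expand w).
Proof.
move=> g1 g2 e; apply/ffunP => x; apply/ffunP => i; apply/eqP.
by rewrite eq_sym -(holds_expand_new w) e holds_expand_new.
Qed.

Section BinaryPredicate.
Variable r : P.
Hypothesis ar_r : ar r = 2.

Definition succ (w : world ar D) (x : D) : {set D} := [set y | holds w r [:: x; y]].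

Definition pair_of (t : (ar r).-tuple D) : D * D :=
  let t2 := tcast ar_r t in (thead t2, nth (thead t2) t2 1).

Lemma pair_ofE t : val t = [:: (pair_of t).1; (pair_of t).2].
Proof. by rewrite /pair_of /= -tuple2E; case: _ / ar_r. Qed.

Lemma pair_of_inj : injective pair_of.
Proof. by move=> t1 t2 e; apply: val_inj; rewrite !pair_ofE e. Qed.

Lemma natoms_succ w : natoms w r = \sum_x #|succ w x|.
Proof.
rewrite /natoms -(card_imset _ pair_of_inj).
set A := [set t | _].
have -> : pair_of @: A = [set p | holds w r [:: p.1; p.2]].
  apply/setP => -[x y]; rewrite inE.
  apply/imsetP/existsP => [[t tA ->]|[t /andP[/eqP tE tw]]].
    by exists t; rewrite inE in tA; rewrite pair_ofE eqxx.
  exists t; rewrite ?inE //.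
  by move: tE; rewrite pair_ofE; case: (pair_of t) => a b /= [-> ->].
rewrite -sum1_card big_mkcond /=.
under [RHS]eq_bigr => x _ do rewrite -sum1_card big_mkcond /=.
by rewrite pair_big /=; apply: eq_bigr => -[x y] _; rewrite !inE.
Qed.

Definition enumerations (w : world ar D) : {set assignment} :=
  [set g : assignment | [forall x, injectiveb (g x) && [forall i, g x i \in succ w x]]].

Lemma card_enumerations w : exactly_k k r w -> #|enumerations w| = k`! ^ #|D|.
Proof.
move=> /forallP exact_w.
pose F x := [set h : {ffun 'I_k -> D} in ffun_on (succ w x) | injectiveb h].
have card_F x : #|F x| = k`!.
  by rewrite card_inj_ffuns_on card_ord (eqP (exact_w x)) ffactnn.
have -> : enumerations w = [set g in family F].
  apply/setP => g; rewrite !inE; apply/forallP/familyP => g_x x; move: (g_x x).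
    by case/andP=> g_inj /forallP g_succ; rewrite inE g_inj andbT; apply/ffun_onP.
  by rewrite inE => /andP[/ffun_onP g_succ ->]; apply/forallP.
rewrite cardsE card_family /image_mem (eq_map card_F) cardE.
by elim: (enum D) => //= a s ->; rewrite expnS.
Qed.

Lemma expand_Phi w g : exactly_k k r w -> g \in enumerations w -> Phi r (expand w g).
Proof.
move=> /forallP exact_w; rewrite inE => /forallP g_enum.
have g_inj x : injective (g x) by case/andP: (g_enum x) => /injectiveP.
have g_succ x i : g x i \in succ w x by case/andP: (g_enum x) => _ /forallP.
have card_succ x : #|succ w x| = k by apply/eqP; apply: exact_w.
apply/and4P; split.
- rewrite natoms_reduct reduct_expand natoms_succ.
  by under eq_bigr => x _ do rewrite card_succ; rewrite sum_nat_const mulnC.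
- apply/forallP => x; apply/forallP => y; rewrite holds_reduct reduct_expand.
  under eq_existsb do rewrite holds_expand_new.
  apply/eqP; apply/idP/idP => [xy|/existsP [i /eqP ->]]; last first.
    by move: (g_succ x i); rewrite inE.
  have y_succ : y \in succ w x by rewrite inE.
  have card_eq : #|succ w x| = #|'I_k| by rewrite card_ord.
  have [j ->] := injective_onto (g_inj x) (g_succ x) card_eq y_succ.
  by apply/existsP; exists j.
- apply/forallP => i; apply/forallP => x; apply/existsP; exists (g x i).
  by rewrite holds_expand_new.
- apply/forallP => i; apply/forallP => j; apply/implyP => ij.
  apply/forallP => x; apply/forallP => y; rewrite !holds_expand_new -negb_and.
  apply/negP => /andP[/eqP yi /eqP yj].
  by move: ij; rewrite (g_inj x i j) ?eqxx // -yi -yj.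
Qed.

Section Decoding.
Variable V : world ear D.
Hypothesis PhiV : Phi r V.

Lemma Phi_total i x : exists y, holds V (inr i) [:: x; y].
Proof. by case/and4P: PhiV => _ _ /forallP /(_ i) /forallP /(_ x) /existsP. Qed.

Lemma Phi_disjoint i j x y :
  i != j -> holds V (inr i) [:: x; y] -> holds V (inr j) [:: x; y] -> False.
Proof.
case/and4P: PhiV => _ _ _ /forallP /(_ i) /forallP /(_ j) /implyP dis ij yi yj.
by move: (dis ij) => /forallP /(_ x) /forallP /(_ y); rewrite yi yj.
Qed.

Definition decode : assignment :=
  [ffun x => [ffun i => odflt x [pick y | holds V (inr i) [:: x; y]]]].

Lemma holds_decode i x : holds V (inr i) [:: x; decode x i].
Proof.
rewrite !ffunE; case: pickP => [y //|none].
by case: (Phi_total i x) => y; rewrite none.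
Qed.

Lemma decode_inj x : injective (decode x).
Proof.
move=> i j e; apply/eqP/negPn/negP => ij.
by apply: (Phi_disjoint ij (holds_decode i x)); rewrite e holds_decode.
Qed.

Lemma decode_succ x i : decode x i \in succ (reduct V) x.
Proof.
rewrite inE -holds_reduct.
case/and4P: PhiV => _ /forallP /(_ x) /forallP /(_ (decode x i)) /eqP -> _ _.
by apply/existsP; exists i; apply: holds_decode.
Qed.

(* Injectivity gives out-degree >= k everywhere, and |R| = k|D| forces equality. *)
Lemma Phi_exactly_k : exactly_k k r (reduct V).
Proof.
have ge_k x : k <= #|succ (reduct V) x|.
  have sub : codom (decode x) \subset succ (reduct V) x.
    by apply/subsetP => _ /codomP [i ->]; apply: decode_succ.
  by rewrite -{1}(card_ord k) -(card_codom (@decode_inj x)) subset_leq_card.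
have sum_eq : \sum_(x : D) k = \sum_x #|succ (reduct V) x|.
  rewrite -natoms_succ -natoms_reduct sum_nat_const mulnC.
  by case/and4P: PhiV => /eqP.
have := (@leqif_sum D predT _ (fun=> k) _ (fun x _ => leqif_eq (ge_k x))).2.
rewrite sum_eq eqxx => /esym/forallP all_eq.
by apply/forallP => x; rewrite eq_sym; apply: all_eq.
Qed.

Lemma decode_unique i x y : holds V (inr i) [:: x; y] -> y = decode x i.
Proof.
move=> xy.
have y_succ : y \in succ (reduct V) x.
  rewrite inE -holds_reduct.
  case/and4P: PhiV => _ /forallP /(_ x) /forallP /(_ y) /eqP -> _ _.
  by apply/existsP; exists i.
have card_succ : #|succ (reduct V) x| = #|'I_k|.
  by rewrite card_ord; move: Phi_exactly_k => /forallP /(_ x) /eqP.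
have [j yj] := injective_onto (@decode_inj x) (decode_succ x) card_succ y_succ.
have [-> //|ij] := eqVneq i j.
by case: (Phi_disjoint ij xy); rewrite yj holds_decode.
Qed.

Lemma decode_enumerations : decode \in enumerations (reduct V).
Proof.
rewrite inE; apply/forallP => x; apply/andP; split.
  by apply/injectiveP; apply: decode_inj.
by apply/forallP => i; apply: decode_succ.
Qed.

Lemma expand_decode : expand (reduct V) decode = V.
Proof.
apply/setP => -[[p|i] t]; rewrite !inE /=; first by rewrite inE.
rewrite (mem_new_atom V i t); apply/eqP/idP => [->|/decode_unique //].
exact: holds_decode.
Qed.

End Decoding.

Lemma card_Phi_fiber w :
  #|[set V | Phi r V & reduct V == w]| = if exactly_k k r w then k`! ^ #|D| else 0.
Proof.
case: ifP => exact_w.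
  have -> : [set V | Phi r V & reduct V == w] = expand w @: enumerations w.
    apply/setP => V; rewrite inE.
    apply/andP/imsetP => [[PhiV /eqP <-]|[g g_enum ->]].
      by exists (decode V); [apply: decode_enumerations | rewrite expand_decode].
    by rewrite reduct_expand; split => //; apply: expand_Phi.
  by rewrite card_imset ?card_enumerations //; apply: expand_inj.
apply/eqP; rewrite cards_eq0; apply/eqP/setP => V; rewrite !inE.
apply/negP => /andP[PhiV /eqP reduct_V].
by move: (Phi_exactly_k PhiV); rewrite reduct_V exact_w.
Qed.

End BinaryPredicate.
End Reduct.

Local Open Scope ring_scope.

Theorem lemma2 (D : finType) (P : finType) (ar : P -> nat) (r : P)
  (ar_r : ar r = 2%N) (k : nat) (k_ge1 : (1 <= k)%N)
  (Gamma : formula P) (Gamma_sentence : sentence Gamma)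
  (R : numFieldType) (wt wbar : P -> R) :
  WFOMC (fun w : world ar D => models w Gamma && exactly_k k r w) wt wbar
  = ((k`!)%:R ^+ #|D|)^-1 *
    WFOMC (fun w : world (ext_ar ar (k:=k)) D =>
             models w (map_formula inl Gamma) && Phi r w)
          (ext_weight wt) (ext_weight wbar).
Proof.
rewrite /WFOMC (partition_big (@reduct D P ar k) predT) //=.
rewrite big_mkcond mulr_sumr; apply: eq_bigr => w _.
have -> : \sum_(V : world (ext_ar ar (k:=k)) D |
              (models V (map_formula inl Gamma) && Phi r V) && (reduct V == w))
            world_weight (ext_weight wt) (ext_weight wbar) V
        = \sum_(V in [set V : world (ext_ar ar (k:=k)) D | Phi r V & reduct V == w]
                | models w Gamma) world_weight wt wbar w.
  apply: eq_big => V; last by move=> /andP[_ /eqP <-]; apply: weight_reduct.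
  rewrite !inE /models eval_reduct.
  by case: eqP => [->|_]; rewrite ?andbT ?andbF // andbC.
case: (models w Gamma) => /=; last by rewrite big1 ?mulr0 // => V /andP[].
under eq_bigl do rewrite andbT.
rewrite sumr_const (card_Phi_fiber _ ar_r).
have fact_neq0 : (k`!)%:R ^+ #|D| != 0 :> R.
  by rewrite expf_neq0 // pnatr_eq0 -lt0n fact_gt0.
case: ifP => _; last by rewrite mulr0n mulr0.
by rewrite -(mulr_natr (world_weight wt wbar w)) natrX mulrCA mulVf ?mulr1.
Qed.
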